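(* Let $g,\eta_p,\lambda>0$. Let $q_l,q_r$ be two states, $q=(h,hu,h\sigma_{xx},h\sigma_{zz})$ with $h>0$, $\sigma_{xx}>0$, $\sigma_{zz}>0$. Define $P_l=P(q_l)$, $P_r=P(q_r)$, $a_l=\sqrt{\partial_h P|_{\boldsymbol s}(h_l,\boldsymbol s_l)}$, $a_r=\sqrt{\partial_h P|_{\boldsymbol s}(h_r,\boldsymbol s_r)}$, and the relaxation speeds $$\frac{c_l}{h_l}=a_l+2\Big(\max(0,u_l-u_r)+\frac{\max(0,P_r-P_l)}{h_la_l+h_ra_r}\Big),\qquad \frac{c_r}{h_r}=a_r+2\Big(\max(0,u_l-u_r)+\frac{\max(0,P_l-P_r)}{h_la_l+h_ra_r}\Big).$$ With $\pi_l=P_l$, $\pi_r=P_r$, define the intermediate heights by $$\frac{1}{h_l^*}=\frac{1}{h_l}+\frac{c_r(u_r-u_l)+\pi_l-\pi_r}{c_l(c_l+c_r)},\qquad \frac{1}{h_r^*}=\frac{1}{h_r}+\frac{c_l(u_r-u_l)+\pi_r-\pi_l}{c_r(c_l+c_r)}.$$ Then $h_l^*$ and $h_r^*$ are well defined and positive (i.e. the right-hand sides above are positive), and $$\forall h\in[h_l,h_l^*]:\ h^2\,\partial_hP|_{\boldsymbol s}(h,\boldsymbol s_l)\le c_l^2,\qquad \forall h\in[h_r,h_r^*]:\ h^2\,\partial_hP|_{\boldsymbol s}(h,\boldsymbol s_r)\le c_r^2,$$ where $[a,b]$ denotes the closed interval between $a$ and $b$ whatever their order. Moreover, the finite volume scheme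 built on these speeds (described in the context) satisfies the discrete energy inequality: there is a numerical energy flux $\mathcal G(q_l,q_r)$ with $\mathcal G(q,q)=G(q)$ such that, under the CFL condition, $E(q_i^{n+1})-E(q_i^n)+\frac{\Delta t}{\Delta x_i}\big(\mathcal G(q_i^n,q_{i+1}^n)-\mathcal G(q_{i-1}^n,q_i^n)\big)\le 0$ for all $i$.
   Context: We consider the one-dimensional system (shallow viscoelastic flow without source terms) for $h\ge0$, velocity $u$, and $\sigma_{xx},\sigma_{zz}>0$: $\partial_t h+\partial_x(hu)=0$, $\partial_t(hu)+\partial_x(hu^2+P)=0$, $\partial_t(h\sigma_{xx})+\partial_x(h\sigma_{xx}u)-2h\sigma_{xx}\partial_xu=0$, $\partial_t(h\sigma_{zz})+\partial_x(h\sigma_{zz}u)+2h\sigma_{zz}\partial_xu=0$, with pressure $P=g\frac{h^2}{2}+\frac{\eta_p}{2\lambda}h(\sigma_{zz}-\sigma_{xx})$, constants $g,\eta_p,\lambda>0$. The (pseudo-conservative) state is $q=(h,hu,h\sigma_{xx},h\sigma_{zz})$. Set $\boldsymbol s=(s_{xx},s_{zz})=(\sigma_{xx}^{-1/2}/h,\ \sigma_{zz}^{1/2}/h)$; viewing $P$ as a function of $(h,\boldsymbol s)$, $P=g h^2/2+\frac{\eta_p}{2\lambda}(h^3s_{zz}^2-\frac{1}{hs_{xx}^2})$, and $\partial_hP|_{\boldsymbol s}=gh+\frac{\eta_p}{2\lambda}(3\sigma_{zz}+\sigma_{xx})$. Energy: $E(q)=h\frac{u^2}{2}+g\frac{h^2}{2}+\frac{\eta_p}{4\lambda}h(\sigma_{xx}+\sigma_{zz}-\ln(\sigma_{xx}\sigma_{zz})-2)$,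 energy flux $G(q)=(E+P)u$. Riemann solver: given $q_l,q_r$ and $c_l,c_r,h_l^*,h_r^*$ as in the claim, set $u^*=\frac{c_lu_l+c_ru_r+\pi_l-\pi_r}{c_l+c_r}$, $\pi^*=\frac{c_r\pi_l+c_l\pi_r-c_lc_r(u_r-u_l)}{c_l+c_r}$, $\sigma_{xx,l}^*=\sigma_{xx,l}(h_l/h_l^* )^2$, $\sigma_{xx,r}^*=\sigma_{xx,r}(h_r/h_r^* )^2$, $\sigma_{zz,l}^*=\sigma_{zz,l}(h_l^*/h_l)^2$, $\sigma_{zz,r}^*=\sigma_{zz,r}(h_r^*/h_r)^2$, $q_l^*=(h_l^*,h_l^*u^*,h_l^*\sigma_{xx,l}^*,h_l^*\sigma_{zz,l}^* )$, $q_r^*$ similarly, and speeds $\Sigma_1=u_l-c_l/h_l$, $\Sigma_2=u^*$, $\Sigma_3=u_r+c_r/h_r$. The self-similar approximate solution $R(\xi)$ equals $q_l$ (with $\pi=\pi_l$) for $\xi<\Sigma_1$, $q_l^*$ (with $\pi=\pi^*$) on $(\Sigma_1,\Sigma_2)$, $q_r^*$ (with $\pi=\pi^*$) on $(\Sigma_2,\Sigma_3)$, $q_r$ (with $\pi=\pi_r$) for $\xi>\Sigma_3$. Numerical fluxes: $\mathcal F_l=(\mathcal F^h,\mathcal F^{hu},\mathcal F_l^{h\sigma_{xx}},\mathcal F_l^{h\sigma_{zz}})$, $\mathcal F_r=(\mathcal F^h,\mathcal F^{hu},\mathcal F_r^{h\sigma_{xx}},\mathcal F_r^{h\sigma_{zz}})$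 where $\mathcal F^h=(hu)$ and $\mathcal F^{hu}=(hu^2+\pi)$ evaluated in $R$ at $\xi=0$, and, writing $w=h\sigma_{xx}$ (resp. $h\sigma_{zz}$), $\mathcal F_l^{w}=(wu)_l+\min(0,\Sigma_1)(w_l^*-w_l)+\min(0,\Sigma_2)(w_r^*-w_l^* )+\min(0,\Sigma_3)(w_r-w_r^* )$, $\mathcal F_r^{w}=(wu)_r-\max(0,\Sigma_1)(w_l^*-w_l)-\max(0,\Sigma_2)(w_r^*-w_l^* )-\max(0,\Sigma_3)(w_r-w_r^* )$. Scheme: cells $(x_{i-1/2},x_{i+1/2})$, $\Delta x_i=x_{i+1/2}-x_{i-1/2}$, time step $\Delta t$, $q_i^{n+1}=q_i^n-\frac{\Delta t}{\Delta x_i}(\mathcal F_l(q_i^n,q_{i+1}^n)-\mathcal F_r(q_{i-1}^n,q_i^n))$. CFL condition: $\Delta t\,A(q_i^n,q_{i+1}^n)\le\frac12\min(\Delta x_i,\Delta x_{i+1})$ for all $i$, with $A(q_l,q_r)=\max(|\Sigma_1|,|\Sigma_2|,|\Sigma_3|)$. *)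

From Stdlib Require Import Reals ZArith.
Open Scope R_scope.

Record state : Type := St {
  st_h : R;
  st_hu : R;
  st_hsxx : R;
  st_hszz : R
}.

Definition vel (q : state) : R := st_hu q / st_h q.
Definition sigxx (q : state) : R := st_hsxx q / st_h q.
Definition sigzz (q : state) : R := st_hszz q / st_h q.

Definition admissible (q : state) : Prop :=
  0 < st_h q /\ 0 < sigxx q /\ 0 < sigzz q.

Definition pressure (g eta lam : R) (q : state) : R :=
  g * st_h q ^ 2 / 2 + eta / (2 * lam) * (st_h q * (sigzz q - sigxx q)).

Definition s_xx (q : state) : R := / (sqrt (sigxx q) * st_h q).
Definition s_zz (q : state) : R := sqrt (sigzz q) / st_h q.

(** P as a function of (h, s) and its partial derivative in h at fixed s:
    P = g h^2/2 + eta_p/(2 lambda) (h^3 s_zz^2 - 1/(h s_xx^2)),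
    d_h P|_s = g h + eta_p/(2 lambda) (3 h^2 s_zz^2 + 1/(h^2 s_xx^2))
             = g h + eta_p/(2 lambda) (3 sigma_zz + sigma_xx). *)
Definition P_hs (g eta lam h sx sz : R) : R :=
  g * h ^ 2 / 2 + eta / (2 * lam) * (h ^ 3 * sz ^ 2 - / (h * sx ^ 2)).
Definition dPdh_s (g eta lam h sx sz : R) : R :=
  g * h + eta / (2 * lam) * (3 * h ^ 2 * sz ^ 2 + / (h ^ 2 * sx ^ 2)).

Definition sound (g eta lam : R) (q : state) : R :=
  sqrt (dPdh_s g eta lam (st_h q) (s_xx q) (s_zz q)).

Definition c_l (g eta lam : R) (ql qr : state) : R :=
  let al := sound g eta lam ql in let ar := sound g eta lam qr in
  let Pl := pressure g eta lam ql in let Pr := pressure g eta lam qr in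
  st_h ql * (al + 2 * (Rmax 0 (vel ql - vel qr)
                       + Rmax 0 (Pr - Pl) / (st_h ql * al + st_h qr * ar))).
Definition c_r (g eta lam : R) (ql qr : state) : R :=
  let al := sound g eta lam ql in let ar := sound g eta lam qr in
  let Pl := pressure g eta lam ql in let Pr := pressure g eta lam qr in
  st_h qr * (ar + 2 * (Rmax 0 (vel ql - vel qr)
                       + Rmax 0 (Pl - Pr) / (st_h ql * al + st_h qr * ar))).

Definition inv_hl_star (g eta lam : R) (ql qr : state) : R :=
  let cl := c_l g eta lam ql qr in let cr := c_r g eta lam ql qr in
  / st_h ql + (cr * (vel qr - vel ql) + pressure g eta lam ql - pressure g eta lam qr)
              / (cl * (cl + cr)).
Definition inv_hr_star (g eta lam : R) (ql qr : state) : R :=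
  let cl := c_l g eta lam ql qr in let cr := c_r g eta lam ql qr in
  / st_h qr + (cl * (vel qr - vel ql) + pressure g eta lam qr - pressure g eta lam ql)
              / (cr * (cl + cr)).
Definition hl_star (g eta lam : R) (ql qr : state) : R := / inv_hl_star g eta lam ql qr.
Definition hr_star (g eta lam : R) (ql qr : state) : R := / inv_hr_star g eta lam ql qr.

Definition u_star (g eta lam : R) (ql qr : state) : R :=
  let cl := c_l g eta lam ql qr in let cr := c_r g eta lam ql qr in
  (cl * vel ql + cr * vel qr + pressure g eta lam ql - pressure g eta lam qr) / (cl + cr).
Definition pi_star (g eta lam : R) (ql qr : state) : R :=
  let cl := c_l g eta lam ql qr in let cr := c_r g eta lam ql qr in
  (cr * pressure g eta lam ql + cl * pressure g eta lam qr
   - cl * cr * (vel qr - vel ql)) / (cl + cr).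

Definition ql_star (g eta lam : R) (ql qr : state) : state :=
  let hs := hl_star g eta lam ql qr in
  let sx := sigxx ql * (st_h ql / hs) ^ 2 in
  let sz := sigzz ql * (hs / st_h ql) ^ 2 in
  St hs (hs * u_star g eta lam ql qr) (hs * sx) (hs * sz).
Definition qr_star (g eta lam : R) (ql qr : state) : state :=
  let hs := hr_star g eta lam ql qr in
  let sx := sigxx qr * (st_h qr / hs) ^ 2 in
  let sz := sigzz qr * (hs / st_h qr) ^ 2 in
  St hs (hs * u_star g eta lam ql qr) (hs * sx) (hs * sz).

Definition Sig1 (g eta lam : R) (ql qr : state) : R := vel ql - c_l g eta lam ql qr / st_h ql.
Definition Sig2 (g eta lam : R) (ql qr : state) : R := u_star g eta lam ql qr.
Definition Sig3 (g eta lam : R) (ql qr : state) : R := vel qr + c_r g eta lam ql qr / st_h qr.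

(** Self-similar approximate Riemann solution R(xi), paired with the value of pi.
    At a wave xi = Sigma_k we take the state on the right of the wave. *)
Definition riemann (g eta lam : R) (ql qr : state) (xi : R) : state * R :=
  if Rlt_dec xi (Sig1 g eta lam ql qr) then (ql, pressure g eta lam ql)
  else if Rlt_dec xi (Sig2 g eta lam ql qr) then (ql_star g eta lam ql qr, pi_star g eta lam ql qr)
  else if Rlt_dec xi (Sig3 g eta lam ql qr) then (qr_star g eta lam ql qr, pi_star g eta lam ql qr)
  else (qr, pressure g eta lam qr).

Definition flux_h (g eta lam : R) (ql qr : state) : R :=
  st_hu (fst (riemann g eta lam ql qr 0)).
Definition flux_hu (g eta lam : R) (ql qr : state) : R :=
  let p := riemann g eta lam ql qr 0 in
  st_hu (fst p) * vel (fst p) + snd p.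

Definition flux_w_l (g eta lam : R) (w : state -> R) (ql qr : state) : R :=
  let qls := ql_star g eta lam ql qr in let qrs := qr_star g eta lam ql qr in
  w ql * vel ql
  + Rmin 0 (Sig1 g eta lam ql qr) * (w qls - w ql)
  + Rmin 0 (Sig2 g eta lam ql qr) * (w qrs - w qls)
  + Rmin 0 (Sig3 g eta lam ql qr) * (w qr - w qrs).
Definition flux_w_r (g eta lam : R) (w : state -> R) (ql qr : state) : R :=
  let qls := ql_star g eta lam ql qr in let qrs := qr_star g eta lam ql qr in
  w qr * vel qr
  - Rmax 0 (Sig1 g eta lam ql qr) * (w qls - w ql)
  - Rmax 0 (Sig2 g eta lam ql qr) * (w qrs - w qls)
  - Rmax 0 (Sig3 g eta lam ql qr) * (w qr - w qrs).

Definition flux_l (g eta lam : R) (ql qr : state) : state :=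
  St (flux_h g eta lam ql qr) (flux_hu g eta lam ql qr)
     (flux_w_l g eta lam st_hsxx ql qr) (flux_w_l g eta lam st_hszz ql qr).
Definition flux_r (g eta lam : R) (ql qr : state) : state :=
  St (flux_h g eta lam ql qr) (flux_hu g eta lam ql qr)
     (flux_w_r g eta lam st_hsxx ql qr) (flux_w_r g eta lam st_hszz ql qr).

Definition scheme_step (g eta lam dt dxi : R) (qm q qp : state) : state :=
  let Fl := flux_l g eta lam q qp in let Fr := flux_r g eta lam qm q in
  St (st_h q - dt / dxi * (st_h Fl - st_h Fr))
     (st_hu q - dt / dxi * (st_hu Fl - st_hu Fr))
     (st_hsxx q - dt / dxi * (st_hsxx Fl - st_hsxx Fr))
     (st_hszz q - dt / dxi * (st_hszz Fl - st_hszz Fr)).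

Definition max_speed (g eta lam : R) (ql qr : state) : R :=
  Rmax (Rabs (Sig1 g eta lam ql qr)) (Rmax (Rabs (Sig2 g eta lam ql qr)) (Rabs (Sig3 g eta lam ql qr))).

Definition energy (g eta lam : R) (q : state) : R :=
  st_h q * vel q ^ 2 / 2 + g * st_h q ^ 2 / 2
  + eta / (4 * lam) * (st_h q * (sigxx q + sigzz q - ln (sigxx q * sigzz q) - 2)).
Definition energy_flux (g eta lam : R) (q : state) : R :=
  (energy g eta lam q + pressure g eta lam q) * vel q.

(* The relaxation speeds exceed the acoustic impedances [h a] by corrections that dominate the
   velocity and pressure jumps, which forces [1/h^* >= (c + h a) / (2 h c)].  Hence [h^*] stays
   below [2 h c / (c + h a)], and on that range [y^2 d_h P|_s (y)], which is increasing and grows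
   at most like [(a y^2 / h)^2] beyond [h], is bounded by [c^2] thanks to AM-GM.

   For the energy inequality, across each acoustic wave of the approximate Riemann solver the
   energy flux balance is [c (h^* - h)^2 / (2 h^2 h^*^2)] times a bracket that the
   subcharacteristic bounds at [h] and [h^*] make at most [c^2], while the contact wave conserves
   energy.  Under the CFL condition the updated cell value is a convex combination of the states
   of the two neighbouring Riemann problems, so Jensen's inequality for the convex energy gives
   the discrete inequality with the numerical flux [G(q_l) + sum_k min(0, S_k) [E]_k]. *)

From Stdlib Require Import Reals ZArith Lra Psatz List.
Import ListNotations.
Open Scope R_scope.

Lemma admissible_components q : admissible q ->
  st_hu q = st_h q * vel q /\ st_hsxx q = st_h q * sigxx q /\ st_hszz q = st_h q * sigzz q.
Proof. intros [Hh _]; unfold vel, sigxx, sigzz; repeat split; field; lra. Qed.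

(* [y <= 2 h c / (c + h a)] means that [y / h] is at most the harmonic mean of
   [1] and [c / (h a)]; AM-GM then gives [a y^2 <= c h]. *)
Lemma sq_le_of_le_harmonic_mean a c h y : 0 < h -> 0 < a -> 0 < y -> 0 < c ->
  y * (c + h * a) <= 2 * h * c -> a * y ^ 2 <= c * h.
Proof.
intros Hh Ha Hy Hc Hyb.
assert (Hp : 0 < h * a) by nra.
assert (Hsq : (y * (c + h * a)) ^ 2 <= (2 * h * c) ^ 2) by (apply pow_incr; split; nra).
assert (Hamgm : 4 * (h * a) * c <= (c + h * a) ^ 2) by (pose proof (pow2_ge_0 (c - h * a)); nra).
assert (Hd : 0 < (c + h * a) ^ 2) by nra.
apply (Rmult_le_reg_r (h * (c + h * a) ^ 2)); [nra|].
replace (a * y ^ 2 * (h * (c + h * a) ^ 2)) with ((h * a) * (y * (c + h * a)) ^ 2) by ring.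
apply Rle_trans with ((h * a) * (2 * h * c) ^ 2); [apply Rmult_le_compat_l; lra|].
replace ((h * a) * (2 * h * c) ^ 2) with (4 * (h * a) * c * (h ^ 2 * c)) by ring.
replace (c * h * (h * (c + h * a) ^ 2)) with ((c + h * a) ^ 2 * (h ^ 2 * c)) by ring.
apply Rmult_le_compat_r; [nra | exact Hamgm].
Qed.

Section Subcharacteristic.
Variables (g eta lam : R) (q : state).
Hypotheses (Hg : 0 < g) (Heta : 0 < eta) (Hlam : 0 < lam) (Hq : admissible q).

Local Notation k := (eta / (2 * lam)).
Local Notation h := (st_h q).

Lemma eta_div_2lam_pos : 0 < k.
Proof. apply Rdiv_lt_0_compat; lra. Qed.

Lemma sq_dPdh_s_eq y : y <> 0 ->
  y ^ 2 * dPdh_s g eta lam y (s_xx q) (s_zz q) =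
  g * y ^ 3 + k * (3 * sigzz q * y ^ 4 / h ^ 2 + sigxx q * h ^ 2).
Proof.
intros Hy; destruct Hq as [Hh [Hx Hz]]; unfold dPdh_s, s_xx, s_zz.
assert (Sx : sqrt (sigxx q) * sqrt (sigxx q) = sigxx q) by (apply sqrt_sqrt; lra).
assert (Sz : sqrt (sigzz q) * sqrt (sigzz q) = sigzz q) by (apply sqrt_sqrt; lra).
assert (Px : 0 < sqrt (sigxx q)) by (apply sqrt_lt_R0; lra).
set (rx := sqrt (sigxx q)) in *; set (rz := sqrt (sigzz q)) in *.
rewrite <- Sx, <- Sz; field; repeat split; lra.
Qed.

Lemma sq_dPdh_s_at_h :
  h ^ 2 * dPdh_s g eta lam h (s_xx q) (s_zz q) = g * h ^ 3 + k * (3 * sigzz q + sigxx q) * h ^ 2.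
Proof.
destruct Hq as [Hh _]; rewrite sq_dPdh_s_eq by lra; field; lra.
Qed.

Lemma dPdh_s_pos : 0 < dPdh_s g eta lam h (s_xx q) (s_zz q).
Proof.
destruct Hq as [Hh [Hx Hz]]; pose proof eta_div_2lam_pos.
apply (Rmult_lt_reg_l (h ^ 2)); [nra|].
rewrite Rmult_0_r, sq_dPdh_s_at_h.
assert (0 < k * (3 * sigzz q + sigxx q)) by nra.
assert (0 < h ^ 3) by (apply pow_lt; lra).
nra.
Qed.

Lemma sound_pos : 0 < sound g eta lam q.
Proof. apply sqrt_lt_R0, dPdh_s_pos. Qed.

Lemma sq_h_sound : (h * sound g eta lam q) ^ 2 = g * h ^ 3 + k * (3 * sigzz q + sigxx q) * h ^ 2.
Proof.
unfold sound; rewrite <- sq_dPdh_s_at_h, Rpow_mult_distr, <- (Rsqr_pow2 (sqrt _)), Rsqr_sqrt;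
  [reflexivity| left; exact dPdh_s_pos].
Qed.

Lemma sq_dPdh_s_le_small y : 0 < y <= h ->
  y ^ 2 * dPdh_s g eta lam y (s_xx q) (s_zz q) <= (h * sound g eta lam q) ^ 2.
Proof.
intros [Hy Hyh]; destruct Hq as [Hh [Hx Hz]]; pose proof eta_div_2lam_pos.
rewrite sq_h_sound, sq_dPdh_s_eq by lra.
assert (y ^ 3 <= h ^ 3) by (apply pow_incr; lra).
assert (y ^ 4 <= h ^ 4) by (apply pow_incr; lra).
replace (k * (3 * sigzz q * y ^ 4 / h ^ 2 + sigxx q * h ^ 2))
  with (3 * (k * sigzz q) * (y ^ 4 / h ^ 2) + k * sigxx q * h ^ 2) by (unfold Rdiv; ring).
assert (y ^ 4 / h ^ 2 <= h ^ 2).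
{ apply (Rmult_le_reg_r (h ^ 2)); [nra|].
  replace (y ^ 4 / h ^ 2 * h ^ 2) with (y ^ 4) by (field; lra); lra. }
assert (0 < k * sigzz q) by nra.
nra.
Qed.

Lemma sq_dPdh_s_le_large y : h <= y ->
  y ^ 2 * dPdh_s g eta lam y (s_xx q) (s_zz q) <= (sound g eta lam q * y ^ 2 / h) ^ 2.
Proof.
intros Hhy; destruct Hq as [Hh [Hx Hz]]; pose proof eta_div_2lam_pos.
assert (Hh0 : 0 < h) by lra.
assert (Hr : 1 <= y / h).
{ apply (Rmult_le_reg_r h); [lra|]; unfold Rdiv; rewrite Rmult_assoc, Rinv_l; lra. }
assert (Hr4 : 1 <= (y / h) ^ 4) by (apply pow_R1_Rle; exact Hr).
replace ((sound g eta lam q * y ^ 2 / h) ^ 2) with ((h * sound g eta lam q) ^ 2 * (y / h) ^ 4)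
  by (field; lra).
rewrite sq_h_sound, sq_dPdh_s_eq by lra.
replace (g * y ^ 3 + k * (3 * sigzz q * y ^ 4 / h ^ 2 + sigxx q * h ^ 2))
  with (g * h ^ 3 * (y / h) ^ 3 + 3 * (k * sigzz q) * h ^ 2 * (y / h) ^ 4 + k * sigxx q * h ^ 2)
  by (field; lra).
assert ((y / h) ^ 3 <= (y / h) ^ 4) by (simpl; nra).
assert (0 < g * h ^ 3) by (apply Rmult_lt_0_compat; [lra| apply pow_lt; lra]).
assert (0 < k * sigxx q * h ^ 2) by (apply Rmult_lt_0_compat; [nra| nra]).
nra.
Qed.

Lemma sq_dPdh_s_le_between c y : h * sound g eta lam q <= c -> 0 < y ->
  y <= Rmax h (2 * h * c / (c + h * sound g eta lam q)) ->
  y ^ 2 * dPdh_s g eta lam y (s_xx q) (s_zz q) <= c ^ 2.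
Proof.
intros Hc Hy Hymax; pose proof sound_pos as Ha; destruct Hq as [Hh _].
assert (Hha : 0 < h * sound g eta lam q) by nra.
destruct (Rle_dec y h) as [Hyh | Hyh].
- apply Rle_trans with ((h * sound g eta lam q) ^ 2); [apply sq_dPdh_s_le_small; lra|].
  apply pow_incr; lra.
- apply Rle_trans with ((sound g eta lam q * y ^ 2 / h) ^ 2); [apply sq_dPdh_s_le_large; lra|].
  apply pow_incr; split; [apply Rle_mult_inv_pos; nra|].
  apply Rmax_Rle in Hymax; destruct Hymax as [|Hyb]; [lra|].
  apply (Rmult_le_reg_r h); [lra|]; unfold Rdiv; rewrite Rmult_assoc, Rinv_l, Rmult_1_r by lra.
  apply (sq_le_of_le_harmonic_mean (sound g eta lam q)); try lra.
  apply (Rmult_le_reg_r (/ (c + h * sound g eta lam q))); [apply Rinv_0_lt_compat; lra|].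
  rewrite Rmult_assoc, Rinv_r, Rmult_1_r by lra; exact Hyb.
Qed.

Lemma subcharacteristic_between c i :
  h * sound g eta lam q <= c -> (c + h * sound g eta lam q) / (2 * h * c) <= i ->
  0 < i /\ forall y, Rmin h (/ i) <= y <= Rmax h (/ i) ->
    y ^ 2 * dPdh_s g eta lam y (s_xx q) (s_zz q) <= c ^ 2.
Proof.
intros Hc Hi; pose proof sound_pos as Ha; destruct Hq as [Hh _].
assert (Hha : 0 < h * sound g eta lam q) by nra.
assert (Hlow : 0 < (c + h * sound g eta lam q) / (2 * h * c)) by (apply Rdiv_lt_0_compat; nra).
assert (Hi0 : 0 < i) by lra.
split; [exact Hi0|]; intros y [Hy1 Hy2].
apply (sq_dPdh_s_le_between c); [exact Hc | | ].
- eapply Rlt_le_trans; [|exact Hy1]; apply Rmin_glb_lt; [lra | apply Rinv_0_lt_compat; lra].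
- eapply Rle_trans; [exact Hy2|]; apply Rle_max_compat_l.
  replace (2 * h * c / (c + h * sound g eta lam q))
    with (/ ((c + h * sound g eta lam q) / (2 * h * c))) by (field; lra).
  apply Rinv_le_contravar; assumption.
Qed.

(* The bracket of [wave_energy_balance]: it lies below [y^2 d_h P|_s (y, s_q)]
   at one of the two ends [y = h] or [y = h']. *)
Lemma wave_bracket_le c h' : 0 < h' ->
  h ^ 2 * dPdh_s g eta lam h (s_xx q) (s_zz q) <= c ^ 2 ->
  h' ^ 2 * dPdh_s g eta lam h' (s_xx q) (s_zz q) <= c ^ 2 ->
  g * h ^ 2 * h' + k * sigxx q * h ^ 2 + k * sigzz q * (h' + 2 * h) * h' <= c ^ 2.
Proof.
intros Hh' H1 H2; destruct Hq as [Hh [Hx Hz]]; pose proof eta_div_2lam_pos.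
rewrite sq_dPdh_s_at_h in H1; rewrite sq_dPdh_s_eq in H2 by lra.
assert (Hkz : 0 < k * sigzz q) by nra.
destruct (Rle_dec h h') as [Hle | Hle].
- assert (g * h ^ 2 * h' <= g * h' ^ 3).
  { replace (g * h' ^ 3) with (g * h' ^ 2 * h') by ring.
    apply Rmult_le_compat_r; [lra|]; apply Rmult_le_compat_l; [lra|]; apply pow_incr; lra. }
  assert ((h' + 2 * h) * h' <= 3 * h' ^ 4 / h ^ 2).
  { apply (Rmult_le_reg_r (h ^ 2)); [nra|].
    replace (3 * h' ^ 4 / h ^ 2 * h ^ 2) with (3 * h' ^ 4) by (field; lra).
    assert (h * h' <= h' ^ 2) by nra.
    assert (h ^ 2 <= h' ^ 2) by nra.
    nra. }
  assert (k * sigzz q * (h' + 2 * h) * h' <= k * (3 * sigzz q * h' ^ 4 / h ^ 2)).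
  { replace (k * (3 * sigzz q * h' ^ 4 / h ^ 2)) with ((k * sigzz q) * (3 * h' ^ 4 / h ^ 2))
      by (field; lra).
    rewrite Rmult_assoc; apply Rmult_le_compat_l; lra. }
  lra.
- assert (g * h ^ 2 * h' <= g * h ^ 3).
  { replace (g * h ^ 3) with (g * h ^ 2 * h) by ring; apply Rmult_le_compat_l; nra. }
  assert (k * sigzz q * (h' + 2 * h) * h' <= k * sigzz q * (3 * h ^ 2)).
  { rewrite Rmult_assoc; apply Rmult_le_compat_l; nra. }
  nra.
Qed.

End Subcharacteristic.

(* The numerator [c' (u_r - u_l) + pi_l - pi_r] of [1/h_l^* - 1/h_l] is written
   [c' (- du) - dP]; the velocity and pressure jumps are bounded by the corrections
   [m] and [t D] that were built into [c]. *)
Lemma inv_star_lower h a c c' D m t du dP : 0 < h -> 0 < a -> 0 < c' -> 0 <= m -> 0 <= t ->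
  D <= c + c' -> du <= m -> dP <= t * D -> c = h * (a + 2 * (m + t)) ->
  (c + h * a) / (2 * h * c) <= / h + (c' * - du - dP) / (c * (c + c')).
Proof.
intros Hh Ha Hc' Hm Ht HD Hdu HdP Hc.
assert (Hc0 : 0 < c) by (subst c; nra).
assert (Hjump : c' * du + dP <= (m + t) * (c + c')).
{ assert (c' * du <= c' * m) by (apply Rmult_le_compat_l; lra).
  assert (t * D <= t * (c + c')) by (apply Rmult_le_compat_l; lra).
  nra. }
assert (Hhc : 0 < h * c) by (apply Rmult_lt_0_compat; lra).
apply (Rmult_le_reg_r (2 * h * c * (c + c'))); [apply Rmult_lt_0_compat; lra|].
replace ((c + h * a) / (2 * h * c) * (2 * h * c * (c + c'))) with ((c + h * a) * (c + c'))
  by (field; repeat split; lra).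
replace ((/ h + (c' * - du - dP) / (c * (c + c'))) * (2 * h * c * (c + c')))
  with (2 * c * (c + c') - 2 * h * (c' * du + dP)) by (field; repeat split; lra).
assert (c - h * a = 2 * h * (m + t)) by (subst c; ring).
nra.
Qed.

Lemma le_relaxation_speed h a m p D : 0 < h -> 0 <= m -> 0 <= p -> 0 < D ->
  h * a <= h * (a + 2 * (m + p / D)).
Proof.
intros Hh Hm Hp HD.
assert (0 <= p / D) by (apply Rle_mult_inv_pos; lra).
nra.
Qed.

Lemma Rmax0_div_mul p D : 0 < D -> p <= Rmax 0 p / D * D.
Proof. intros HD; unfold Rdiv; rewrite Rmult_assoc, Rinv_l, Rmult_1_r by lra; apply Rmax_r. Qed.

Definition energy_of (g eta lam h u x z : R) : R :=
  h * u ^ 2 / 2 + g * h ^ 2 / 2 + eta / (4 * lam) * (h * (x + z - ln (x * z) - 2)).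
Definition pressure_of (g eta lam h x z : R) : R :=
  g * h ^ 2 / 2 + eta / (2 * lam) * (h * (z - x)).

Lemma prim_St h u x z : h <> 0 ->
  vel (St h (h * u) (h * x) (h * z)) = u /\ sigxx (St h (h * u) (h * x) (h * z)) = x /\
  sigzz (St h (h * u) (h * x) (h * z)) = z.
Proof. intros Hh; unfold vel, sigxx, sigzz; cbn; repeat split; field; exact Hh. Qed.

Lemma energy_St g eta lam h u x z : h <> 0 ->
  energy g eta lam (St h (h * u) (h * x) (h * z)) = energy_of g eta lam h u x z.
Proof.
intros Hh; destruct (prim_St h u x z Hh) as (Hu & Hx & Hz).
unfold energy; rewrite Hu, Hx, Hz; reflexivity.
Qed.

Lemma admissible_St h u x z : 0 < h -> 0 < x -> 0 < z -> admissible (St h (h * u) (h * x) (h * z)).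
Proof.
intros Hh Hx Hz; destruct (prim_St h u x z ltac:(lra)) as (_ & Ex & Ez).
unfold admissible; rewrite Ex, Ez; auto.
Qed.

(* A 1-wave (or, with [c < 0], a 3-wave) of the relaxation solver with Lagrangian speed [c]:
   [1/h] jumps to [1/h'], [u] and [pi] follow from the relaxed Rankine-Hugoniot relations,
   [sigma_xx h^2] and [sigma_zz / h^2] are Riemann invariants, and [S = u - c / h]. *)
Lemma wave_energy_balance g eta lam h h' u u' c x z P pi' S : lam <> 0 -> 0 < h -> 0 < h' ->
  0 < x -> 0 < z ->
  u' = u + c * (/ h' - / h) -> P = pressure_of g eta lam h x z -> pi' = P - c * (u' - u) ->
  S = u - c / h ->
  let E' := energy_of g eta lam h' u' (x * (h / h') ^ 2) (z * (h' / h) ^ 2) in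
  let E := energy_of g eta lam h u x z in
  (E' + pi') * u' - (E + P) * u - S * (E' - E)
  = c * ((h' - h) ^ 2 / (2 * h ^ 2 * h' ^ 2))
    * (g * h ^ 2 * h' + eta / (2 * lam) * x * h ^ 2 + eta / (2 * lam) * z * (h' + 2 * h) * h'
       - c ^ 2).
Proof.
intros Hl Hh Hh' Hx Hz Hu HP Hpi HS; cbv zeta; subst; unfold energy_of, pressure_of.
replace (ln (x * (h / h') ^ 2 * (z * (h' / h) ^ 2))) with (ln (x * z)) by (f_equal; field; lra).
field; repeat split; lra.
Qed.

Lemma wave_rankine_hugoniot h h' u u' c P pi' S : 0 < h -> 0 < h' ->
  u' = u + c * (/ h' - / h) -> pi' = P - c * (u' - u) -> S = u - c / h ->
  h' * u' - h * u = S * (h' - h) /\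
  (h' * u' * u' + pi') - (h * u * u + P) = S * (h' * u' - h * u).
Proof. intros Hh Hh' Hu Hpi HS; subst; split; field; lra. Qed.

Lemma Rmin0_add_Rmax0 s : Rmin 0 s + Rmax 0 s = s.
Proof. unfold Rmin, Rmax; destruct Rle_dec; lra. Qed.

Definition wave_sum (g eta lam : R) (f : R -> R) (X : state -> R) (ql qr : state) : R :=
  f (Sig1 g eta lam ql qr) * (X (ql_star g eta lam ql qr) - X ql)
  + f (Sig2 g eta lam ql qr) * (X (qr_star g eta lam ql qr) - X (ql_star g eta lam ql qr))
  + f (Sig3 g eta lam ql qr) * (X qr - X (qr_star g eta lam ql qr)).

Lemma wave_sum_min_max g eta lam X ql qr :
  wave_sum g eta lam (Rmin 0) X ql qr + wave_sum g eta lam (Rmax 0) X ql qr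
  = wave_sum g eta lam (fun s => s) X ql qr.
Proof.
assert (Hsplit : forall s a, s * a = Rmin 0 s * a + Rmax 0 s * a)
  by (intros; rewrite <- Rmult_plus_distr_r, Rmin0_add_Rmax0; reflexivity).
unfold wave_sum.
rewrite (Hsplit (Sig1 _ _ _ _ _)), (Hsplit (Sig2 _ _ _ _ _)), (Hsplit (Sig3 _ _ _ _ _)); ring.
Qed.

Set Default Proof Using "All".

Section RiemannSolver.
Variables (g eta lam : R) (ql qr : state).
Hypotheses (Hg : 0 < g) (Heta : 0 < eta) (Hlam : 0 < lam)
  (Hql : admissible ql) (Hqr : admissible qr).

Local Notation al := (sound g eta lam ql).
Local Notation ar := (sound g eta lam qr).
Local Notation cl := (c_l g eta lam ql qr).
Local Notation cr := (c_r g eta lam ql qr).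
Local Notation D := (st_h ql * al + st_h qr * ar).

Lemma impedance_sum_pos : 0 < D.
Proof.
pose proof (sound_pos g eta lam ql Hg Heta Hlam Hql).
pose proof (sound_pos g eta lam qr Hg Heta Hlam Hqr).
destruct Hql as [Hhl _]; destruct Hqr as [Hhr _]; nra.
Qed.

Lemma c_l_ge : st_h ql * al <= cl.
Proof.
apply le_relaxation_speed; [apply Hql | apply Rmax_l | apply Rmax_l | exact impedance_sum_pos].
Qed.

Lemma c_r_ge : st_h qr * ar <= cr.
Proof.
apply le_relaxation_speed; [apply Hqr | apply Rmax_l | apply Rmax_l | exact impedance_sum_pos].
Qed.

Lemma c_l_pos : 0 < cl.
Proof.
pose proof (sound_pos g eta lam ql Hg Heta Hlam Hql); pose proof c_l_ge.
destruct Hql as [Hhl _]; nra.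
Qed.

Lemma c_r_pos : 0 < cr.
Proof.
pose proof (sound_pos g eta lam qr Hg Heta Hlam Hqr); pose proof c_r_ge.
destruct Hqr as [Hhr _]; nra.
Qed.

Lemma inv_hl_star_lower : (cl + st_h ql * al) / (2 * st_h ql * cl) <= inv_hl_star g eta lam ql qr.
Proof.
pose proof impedance_sum_pos; pose proof c_l_ge; pose proof c_r_ge.
unfold inv_hl_star; cbv zeta.
replace (cr * (vel qr - vel ql) + pressure g eta lam ql - pressure g eta lam qr)
  with (cr * - (vel ql - vel qr) - (pressure g eta lam qr - pressure g eta lam ql)) by ring.
apply (inv_star_lower _ _ _ _ D (Rmax 0 (vel ql - vel qr))
         (Rmax 0 (pressure g eta lam qr - pressure g eta lam ql) / D));
  [apply Hql | apply sound_pos; auto | apply c_r_pos | apply Rmax_l | | lra | apply Rmax_r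
  | apply Rmax0_div_mul; lra | reflexivity].
apply Rle_mult_inv_pos; [apply Rmax_l | lra].
Qed.

Lemma inv_hr_star_lower : (cr + st_h qr * ar) / (2 * st_h qr * cr) <= inv_hr_star g eta lam ql qr.
Proof.
pose proof impedance_sum_pos; pose proof c_l_ge; pose proof c_r_ge.
unfold inv_hr_star; cbv zeta.
replace (cl * (vel qr - vel ql) + pressure g eta lam qr - pressure g eta lam ql)
  with (cl * - (vel ql - vel qr) - (pressure g eta lam ql - pressure g eta lam qr)) by ring.
rewrite (Rplus_comm cl cr).
apply (inv_star_lower _ _ _ _ D (Rmax 0 (vel ql - vel qr))
         (Rmax 0 (pressure g eta lam ql - pressure g eta lam qr) / D));
  [apply Hqr | apply sound_pos; auto | apply c_l_pos | apply Rmax_l | | lra | apply Rmax_r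
  | apply Rmax0_div_mul; lra | reflexivity].
apply Rle_mult_inv_pos; [apply Rmax_l | lra].
Qed.

Theorem relaxation_subcharacteristic :
  0 < inv_hl_star g eta lam ql qr /\ 0 < inv_hr_star g eta lam ql qr /\
  (forall h, Rmin (st_h ql) (hl_star g eta lam ql qr) <= h <=
             Rmax (st_h ql) (hl_star g eta lam ql qr) ->
     h ^ 2 * dPdh_s g eta lam h (s_xx ql) (s_zz ql) <= cl ^ 2) /\
  (forall h, Rmin (st_h qr) (hr_star g eta lam ql qr) <= h <=
             Rmax (st_h qr) (hr_star g eta lam ql qr) ->
     h ^ 2 * dPdh_s g eta lam h (s_xx qr) (s_zz qr) <= cr ^ 2).
Proof.
destruct (subcharacteristic_between g eta lam ql Hg Heta Hlam Hql cl _ c_l_ge inv_hl_star_lower)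
  as [Hl Hbl].
destruct (subcharacteristic_between g eta lam qr Hg Heta Hlam Hqr cr _ c_r_ge inv_hr_star_lower)
  as [Hr Hbr].
repeat split; assumption.
Qed.

Local Notation hl := (st_h ql).
Local Notation hr := (st_h qr).
Local Notation hls := (hl_star g eta lam ql qr).
Local Notation hrs := (hr_star g eta lam ql qr).
Local Notation us := (u_star g eta lam ql qr).
Local Notation ps := (pi_star g eta lam ql qr).
Local Notation Pl := (pressure g eta lam ql).
Local Notation Pr := (pressure g eta lam qr).
Local Notation S1 := (Sig1 g eta lam ql qr).
Local Notation S2 := (Sig2 g eta lam ql qr).
Local Notation S3 := (Sig3 g eta lam ql qr).
Local Notation qls := (ql_star g eta lam ql qr).
Local Notation qrs := (qr_star g eta lam ql qr).

Lemma hl_star_pos : 0 < hls.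
Proof. apply Rinv_0_lt_compat, relaxation_subcharacteristic. Qed.

Lemma hr_star_pos : 0 < hrs.
Proof. apply Rinv_0_lt_compat, relaxation_subcharacteristic. Qed.

Lemma u_star_left : us = vel ql + cl * (/ hls - / hl).
Proof.
pose proof c_l_pos; pose proof c_r_pos; destruct Hql as [Hhl _].
unfold hl_star; rewrite Rinv_inv; unfold u_star, inv_hl_star; cbv zeta; field; lra.
Qed.

Lemma u_star_right : us = vel qr + - cr * (/ hrs - / hr).
Proof.
pose proof c_l_pos; pose proof c_r_pos; destruct Hqr as [Hhr _].
unfold hr_star; rewrite Rinv_inv; unfold u_star, inv_hr_star; cbv zeta; field; lra.
Qed.

Lemma pi_star_left : ps = Pl - cl * (us - vel ql).
Proof. pose proof c_l_pos; pose proof c_r_pos; unfold pi_star, u_star; cbv zeta; field; lra. Qed.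

Lemma pi_star_right : ps = Pr - - cr * (us - vel qr).
Proof. pose proof c_l_pos; pose proof c_r_pos; unfold pi_star, u_star; cbv zeta; field; lra. Qed.

Lemma Sig3_eq : S3 = vel qr - - cr / hr.
Proof. unfold Sig3, Rdiv; ring. Qed.

Lemma Sig_order : S1 < S2 < S3.
Proof.
pose proof c_l_pos; pose proof c_r_pos; pose proof hl_star_pos; pose proof hr_star_pos.
assert (S2 - S1 = cl / hls) by (unfold Sig1, Sig2; rewrite u_star_left; unfold Rdiv; ring).
assert (S3 - S2 = cr / hrs) by (unfold Sig2; rewrite Sig3_eq, u_star_right; unfold Rdiv; ring).
assert (0 < cl / hls) by (apply Rdiv_lt_0_compat; lra).
assert (0 < cr / hrs) by (apply Rdiv_lt_0_compat; lra).
lra.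
Qed.

Lemma admissible_ql_star : admissible qls.
Proof.
pose proof hl_star_pos; destruct Hql as (Hh & Hx & Hz).
unfold ql_star; cbv zeta; apply admissible_St; [lra | |];
  apply Rmult_lt_0_compat; try lra; apply pow_lt, Rdiv_lt_0_compat; lra.
Qed.

Lemma admissible_qr_star : admissible qrs.
Proof.
pose proof hr_star_pos; destruct Hqr as (Hh & Hx & Hz).
unfold qr_star; cbv zeta; apply admissible_St; [lra | |];
  apply Rmult_lt_0_compat; try lra; apply pow_lt, Rdiv_lt_0_compat; lra.
Qed.

Lemma energy_ql_star :
  energy g eta lam qls
  = energy_of g eta lam hls us (sigxx ql * (hl / hls) ^ 2) (sigzz ql * (hls / hl) ^ 2).
Proof. pose proof hl_star_pos; unfold ql_star; cbv zeta; apply energy_St; lra. Qed.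

Lemma energy_qr_star :
  energy g eta lam qrs
  = energy_of g eta lam hrs us (sigxx qr * (hr / hrs) ^ 2) (sigzz qr * (hrs / hr) ^ 2).
Proof. pose proof hr_star_pos; unfold qr_star; cbv zeta; apply energy_St; lra. Qed.

Lemma energy_dissipation :
  energy_flux g eta lam qr - energy_flux g eta lam ql
  - wave_sum g eta lam (fun s => s) (energy g eta lam) ql qr <= 0.
Proof.
pose proof c_l_pos; pose proof c_r_pos; pose proof hl_star_pos; pose proof hr_star_pos.
pose proof Hql as (Hhl & Hxl & Hzl); pose proof Hqr as (Hhr & Hxr & Hzr).
destruct relaxation_subcharacteristic as (_ & _ & Hsl & Hsr).
assert (Bl : g * hl ^ 2 * hls + eta / (2 * lam) * sigxx ql * hl ^ 2
             + eta / (2 * lam) * sigzz ql * (hls + 2 * hl) * hls <= cl ^ 2).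
{ apply wave_bracket_le; auto; apply Hsl; split;
    first [apply Rmin_l | apply Rmax_l | apply Rmin_r | apply Rmax_r]. }
assert (Br : g * hr ^ 2 * hrs + eta / (2 * lam) * sigxx qr * hr ^ 2
             + eta / (2 * lam) * sigzz qr * (hrs + 2 * hr) * hrs <= (- cr) ^ 2).
{ replace ((- cr) ^ 2) with (cr ^ 2) by ring.
  apply wave_bracket_le; auto; apply Hsr; split;
    first [apply Rmin_l | apply Rmax_l | apply Rmin_r | apply Rmax_r]. }
pose proof (wave_energy_balance g eta lam hl hls (vel ql) us cl (sigxx ql) (sigzz ql) Pl ps S1
  ltac:(lra) Hhl ltac:(lra) Hxl Hzl u_star_left eq_refl pi_star_left eq_refl) as Wl.
pose proof (wave_energy_balance g eta lam hr hrs (vel qr) us (- cr) (sigxx qr) (sigzz qr) Pr ps S3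
  ltac:(lra) Hhr ltac:(lra) Hxr Hzr u_star_right eq_refl pi_star_right Sig3_eq) as Wr.
cbv zeta in Wl, Wr.
assert (Al : 0 <= (hls - hl) ^ 2 / (2 * hl ^ 2 * hls ^ 2)).
{ apply Rle_mult_inv_pos; [apply pow2_ge_0|]; apply Rmult_lt_0_compat; [nra| apply pow_lt; lra]. }
assert (Ar : 0 <= (hrs - hr) ^ 2 / (2 * hr ^ 2 * hrs ^ 2)).
{ apply Rle_mult_inv_pos; [apply pow2_ge_0|]; apply Rmult_lt_0_compat; [nra| apply pow_lt; lra]. }
assert (Dl : 0 <= cl * ((hls - hl) ^ 2 / (2 * hl ^ 2 * hls ^ 2)) * (cl ^ 2 - (g * hl ^ 2 * hls
   + eta / (2 * lam) * sigxx ql * hl ^ 2 + eta / (2 * lam) * sigzz ql * (hls + 2 * hl) * hls)))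
  by (apply Rmult_le_pos; [apply Rmult_le_pos|]; lra).
assert (Dr : 0 <= cr * ((hrs - hr) ^ 2 / (2 * hr ^ 2 * hrs ^ 2)) * ((- cr) ^ 2 - (g * hr ^ 2 * hrs
   + eta / (2 * lam) * sigxx qr * hr ^ 2 + eta / (2 * lam) * sigzz qr * (hrs + 2 * hr) * hrs)))
  by (apply Rmult_le_pos; [apply Rmult_le_pos|]; lra).
rewrite <- energy_ql_star in Wl; rewrite <- energy_qr_star in Wr.
unfold energy_flux, wave_sum, Sig2.
change (energy g eta lam ql) with (energy_of g eta lam hl (vel ql) (sigxx ql) (sigzz ql)) in *.
change (energy g eta lam qr) with (energy_of g eta lam hr (vel qr) (sigxx qr) (sigzz qr)) in *.
lra.
Qed.

Definition waves_consistent (F : state * R -> R) (X : state -> R) : Prop :=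
  F (qls, ps) - F (ql, Pl) = S1 * (X qls - X ql) /\
  F (qrs, ps) - F (qls, ps) = S2 * (X qrs - X qls) /\
  F (qr, Pr) - F (qrs, ps) = S3 * (X qr - X qrs).

Lemma flux_at_zero_left F X : waves_consistent F X ->
  F (riemann g eta lam ql qr 0) = F (ql, Pl) + wave_sum g eta lam (Rmin 0) X ql qr.
Proof.
intros (R1 & R2 & R3); pose proof Sig_order; unfold riemann, wave_sum.
destruct (Rlt_dec 0 S1).
{ rewrite !(Rmin_left 0) by lra; ring. }
destruct (Rlt_dec 0 S2).
{ rewrite (Rmin_right 0 S1), (Rmin_left 0 S2), (Rmin_left 0 S3) by lra; lra. }
destruct (Rlt_dec 0 S3).
{ rewrite (Rmin_right 0 S1), (Rmin_right 0 S2), (Rmin_left 0 S3) by lra; lra. }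
rewrite !(Rmin_right 0) by lra; lra.
Qed.

Lemma flux_at_zero_right F X : waves_consistent F X ->
  F (riemann g eta lam ql qr 0) = F (qr, Pr) - wave_sum g eta lam (Rmax 0) X ql qr.
Proof.
intros HF; rewrite (flux_at_zero_left F X HF).
pose proof (wave_sum_min_max g eta lam X ql qr) as Hmm.
destruct HF as (R1 & R2 & R3); unfold wave_sum in *; lra.
Qed.

Lemma rankine_hugoniot_left :
  hls * us - hl * vel ql = S1 * (hls - hl) /\
  (hls * us * us + ps) - (hl * vel ql * vel ql + Pl) = S1 * (hls * us - hl * vel ql).
Proof.
apply (wave_rankine_hugoniot _ _ _ _ cl);
  [apply Hql | apply hl_star_pos | apply u_star_left | apply pi_star_left | reflexivity].
Qed.

Lemma rankine_hugoniot_right :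
  hrs * us - hr * vel qr = S3 * (hrs - hr) /\
  (hrs * us * us + ps) - (hr * vel qr * vel qr + Pr) = S3 * (hrs * us - hr * vel qr).
Proof.
apply (wave_rankine_hugoniot _ _ _ _ (- cr));
  [apply Hqr | apply hr_star_pos | apply u_star_right | apply pi_star_right | apply Sig3_eq].
Qed.

Lemma mass_waves : waves_consistent (fun p => st_hu (fst p)) st_h.
Proof.
destruct (admissible_components ql Hql) as [Hul _]; destruct (admissible_components qr Hqr) as [Hur _].
destruct rankine_hugoniot_left as [Ml _]; destruct rankine_hugoniot_right as [Mr _].
unfold waves_consistent, ql_star, qr_star, Sig2; cbv zeta; cbn [fst st_h st_hu]; rewrite Hul, Hur.
repeat split; lra.
Qed.

Lemma momentum_waves : waves_consistent (fun p => st_hu (fst p) * vel (fst p) + snd p) st_hu.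
Proof.
pose proof hl_star_pos as Hls; pose proof hr_star_pos as Hrs.
destruct (admissible_components ql Hql) as [Hul _]; destruct (admissible_components qr Hqr) as [Hur _].
destruct rankine_hugoniot_left as [_ Ml]; destruct rankine_hugoniot_right as [_ Mr].
destruct (prim_St hls us (sigxx ql * (hl / hls) ^ 2) (sigzz ql * (hls / hl) ^ 2) ltac:(lra)) as [Vl _].
destruct (prim_St hrs us (sigxx qr * (hr / hrs) ^ 2) (sigzz qr * (hrs / hr) ^ 2) ltac:(lra)) as [Vr _].
unfold waves_consistent, ql_star, qr_star, Sig2; cbv zeta; cbn [fst snd st_h st_hu].
rewrite Vl, Vr, Hul, Hur.
repeat split; lra.
Qed.

Lemma flux_h_left : flux_h g eta lam ql qr = st_hu ql + wave_sum g eta lam (Rmin 0) st_h ql qr.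
Proof. exact (flux_at_zero_left _ _ mass_waves). Qed.

Lemma flux_h_right : flux_h g eta lam ql qr = st_hu qr - wave_sum g eta lam (Rmax 0) st_h ql qr.
Proof. exact (flux_at_zero_right _ _ mass_waves). Qed.

Lemma flux_hu_left :
  flux_hu g eta lam ql qr = st_hu ql * vel ql + Pl + wave_sum g eta lam (Rmin 0) st_hu ql qr.
Proof. exact (flux_at_zero_left _ _ momentum_waves). Qed.

Lemma flux_hu_right :
  flux_hu g eta lam ql qr = st_hu qr * vel qr + Pr - wave_sum g eta lam (Rmax 0) st_hu ql qr.
Proof. exact (flux_at_zero_right _ _ momentum_waves). Qed.

End RiemannSolver.

Definition num_energy_flux (g eta lam : R) (ql qr : state) : R :=
  energy_flux g eta lam ql + wave_sum g eta lam (Rmin 0) (energy g eta lam) ql qr.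

Lemma num_energy_flux_diag g eta lam q : 0 < g -> 0 < eta -> 0 < lam -> admissible q ->
  num_energy_flux g eta lam q q = energy_flux g eta lam q.
Proof.
intros Hg Heta Hlam Hq; pose proof Hq as (Hh & _ & _).
pose proof (c_l_pos g eta lam q q Hg Heta Hlam Hq Hq).
assert (Hinv : forall c, c * (vel q - vel q) + pressure g eta lam q - pressure g eta lam q = 0)
  by (intros; ring).
assert (Hl : hl_star g eta lam q q = st_h q).
{ unfold hl_star, inv_hl_star; cbv zeta; rewrite Hinv, Rdiv_0_l, Rplus_0_r; apply Rinv_inv. }
assert (Hr : hr_star g eta lam q q = st_h q).
{ unfold hr_star, inv_hr_star; cbv zeta; rewrite Hinv, Rdiv_0_l, Rplus_0_r; apply Rinv_inv. }
assert (Hu : u_star g eta lam q q = vel q).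
{ unfold u_star; cbv zeta; change (c_r g eta lam q q) with (c_l g eta lam q q); field; lra. }
assert (Hrat : st_h q / st_h q = 1) by (field; lra).
assert (El : energy g eta lam (ql_star g eta lam q q) = energy g eta lam q).
{ rewrite energy_ql_star by auto; rewrite Hl, Hu, Hrat, pow1, !Rmult_1_r; reflexivity. }
assert (Er : energy g eta lam (qr_star g eta lam q q) = energy g eta lam q).
{ rewrite energy_qr_star by auto; rewrite Hr, Hu, Hrat, pow1, !Rmult_1_r; reflexivity. }
unfold num_energy_flux, wave_sum; rewrite El, Er; ring.
Qed.

Definition wsum (l : list (R * state)) (X : state -> R) : R :=
  fold_right (fun p acc => fst p * X (snd p) + acc) 0 l.

Definition average (l : list (R * state)) : state :=
  St (wsum l st_h) (wsum l st_hu) (wsum l st_hsxx) (wsum l st_hszz).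

Lemma wsum_le l X Y : (forall p, In p l -> 0 <= fst p /\ X (snd p) <= Y (snd p)) ->
  wsum l X <= wsum l Y.
Proof.
induction l as [|p l IH]; cbn; intros H; [lra|].
destruct (H p (or_introl eq_refl)) as [Hw HXY].
assert (wsum l X <= wsum l Y) by (apply IH; auto).
unfold wsum in *; nra.
Qed.

Lemma wsum_pos l X : (forall p, In p l -> 0 <= fst p /\ 0 < X (snd p)) ->
  0 < wsum l (fun _ => 1) -> 0 < wsum l X.
Proof.
intros H; enough (0 <= wsum l X /\ (0 < wsum l (fun _ => 1) -> 0 < wsum l X)) by tauto.
induction l as [|p l IH]; cbn; [lra|].
destruct (H p (or_introl eq_refl)) as [Hw HX].
destruct IH as [IH0 IH1]; [intros; apply H; right; assumption|].
unfold wsum in *; split; [nra|]; intros Hsum.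
destruct Hw as [Hw|Hw]; [nra|]; rewrite <- Hw in *; nra.
Qed.

Definition energy_tangent (g eta lam : R) (p s : state) : R :=
  energy g eta lam p
  + (- vel p ^ 2 / 2 + g * st_h p - eta / (4 * lam) * (ln (sigxx p) + ln (sigzz p)))
    * (st_h s - st_h p)
  + vel p * (st_hu s - st_hu p)
  + eta / (4 * lam) * (1 - / sigxx p) * (st_hsxx s - st_hsxx p)
  + eta / (4 * lam) * (1 - / sigzz p) * (st_hszz s - st_hszz p).

Lemma ln_le_sub_1 y : 0 < y -> ln y <= y - 1.
Proof. intros Hy; pose proof (exp_ineq1_le (ln y)) as He; rewrite exp_ln in He; lra. Qed.

(* The gap to the tangent plane is
   [h_s/2 (u_s - u_p)^2 + g/2 (h_s - h_p)^2 + eta/(4 lam) h_s (phi(x_s/x_p) + phi(z_s/z_p))]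
   with [phi(r) = r - 1 - ln r >= 0]. *)
Lemma energy_ge_tangent g eta lam p s : 0 < g -> 0 < eta -> 0 < lam ->
  admissible p -> admissible s -> energy_tangent g eta lam p s <= energy g eta lam s.
Proof.
intros Hg He Hl Hp Hs.
destruct (admissible_components p Hp) as (P1 & P2 & P3).
destruct (admissible_components s Hs) as (S1 & S2 & S3).
destruct Hp as (Hhp & Hxp & Hzp); destruct Hs as (Hhs & Hxs & Hzs).
unfold energy_tangent, energy; rewrite P1, P2, P3, S1, S2, S3, !ln_mult by lra.
pose proof (ln_le_sub_1 (sigxx s / sigxx p) ltac:(apply Rdiv_lt_0_compat; lra)) as Lx.
pose proof (ln_le_sub_1 (sigzz s / sigzz p) ltac:(apply Rdiv_lt_0_compat; lra)) as Lz.
unfold Rdiv in Lx, Lz; rewrite ln_mult, ln_Rinv in Lx, Lz by (try apply Rinv_0_lt_compat; lra).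
assert (K : 0 < eta / (4 * lam)) by (apply Rdiv_lt_0_compat; lra).
set (k := eta / (4 * lam)) in *.
set (hp := st_h p) in *; set (hs := st_h s) in *; set (up := vel p) in *; set (us := vel s) in *.
set (xp := sigxx p) in *; set (xs := sigxx s) in *; set (zp := sigzz p) in *; set (zs := sigzz s) in *.
assert (Hgap : hs * us ^ 2 / 2 + g * hs ^ 2 / 2 + k * (hs * (xs + zs - (ln xs + ln zs) - 2))
  - (hp * up ^ 2 / 2 + g * hp ^ 2 / 2 + k * (hp * (xp + zp - (ln xp + ln zp) - 2))
     + (- up ^ 2 / 2 + g * hp - k * (ln xp + ln zp)) * (hs - hp) + up * (hs * us - hp * up)
     + k * (1 - / xp) * (hs * xs - hp * xp) + k * (1 - / zp) * (hs * zs - hp * zp))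
  = hs / 2 * (us - up) ^ 2 + g / 2 * (hs - hp) ^ 2
    + k * hs * ((xs * / xp - 1 - (ln xs + - ln xp)) + (zs * / zp - 1 - (ln zs + - ln zp))))
  by (field; lra).
assert (0 <= hs / 2 * (us - up) ^ 2) by (apply Rmult_le_pos; [lra | apply pow2_ge_0]).
assert (0 <= g / 2 * (hs - hp) ^ 2) by (apply Rmult_le_pos; [lra | apply pow2_ge_0]).
assert (0 <= k * hs * ((xs * / xp - 1 - (ln xs + - ln xp)) + (zs * / zp - 1 - (ln zs + - ln zp))))
  by (apply Rmult_le_pos; [apply Rmult_le_pos |]; lra).
lra.
Qed.

Lemma wsum_energy_tangent g eta lam l p :
  wsum l (energy_tangent g eta lam p) =
  energy g eta lam p * wsum l (fun _ => 1)
  + (- vel p ^ 2 / 2 + g * st_h p - eta / (4 * lam) * (ln (sigxx p) + ln (sigzz p)))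
    * (wsum l st_h - st_h p * wsum l (fun _ => 1))
  + vel p * (wsum l st_hu - st_hu p * wsum l (fun _ => 1))
  + eta / (4 * lam) * (1 - / sigxx p) * (wsum l st_hsxx - st_hsxx p * wsum l (fun _ => 1))
  + eta / (4 * lam) * (1 - / sigzz p) * (wsum l st_hszz - st_hszz p * wsum l (fun _ => 1)).
Proof.
induction l as [|q l IH]; unfold wsum in *; cbn [fold_right]; [ring|].
rewrite IH; unfold energy_tangent; ring.
Qed.

Lemma energy_jensen g eta lam l : 0 < g -> 0 < eta -> 0 < lam ->
  (forall p, In p l -> 0 <= fst p /\ admissible (snd p)) -> wsum l (fun _ => 1) = 1 ->
  admissible (average l) /\ energy g eta lam (average l) <= wsum l (energy g eta lam).
Proof.
intros Hg He Hl Hw H1.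
assert (Hpos : forall X, (forall s, admissible s -> 0 < X s) -> 0 < wsum l X).
{ intros X HX; apply wsum_pos; [|lra]; intros p Hp; destruct (Hw p Hp); auto. }
assert (Ha : admissible (average l)).
{ unfold admissible, average, sigxx, sigzz; cbn [st_h st_hsxx st_hszz].
  assert (0 < wsum l st_h) by (apply Hpos; intros s [Hs _]; exact Hs).
  split; [lra|]; split; apply Rdiv_lt_0_compat; try lra; apply Hpos; intros s Hs;
    destruct (admissible_components s Hs) as (_ & Ex & Ez); destruct Hs as (Hs & Hx & Hz);
    [rewrite Ex | rewrite Ez]; nra. }
split; [exact Ha|].
assert (Ht : wsum l (energy_tangent g eta lam (average l)) = energy g eta lam (average l)).
{ rewrite wsum_energy_tangent, H1.
  change (st_h (average l)) with (wsum l st_h); change (st_hu (average l)) with (wsum l st_hu).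
  change (st_hsxx (average l)) with (wsum l st_hsxx).
  change (st_hszz (average l)) with (wsum l st_hszz); ring. }
rewrite <- Ht; apply wsum_le; intros p Hp; destruct (Hw p Hp); split; auto.
apply energy_ge_tangent; auto.
Qed.

Lemma flux_w_l_eq g eta lam w ql qr :
  flux_w_l g eta lam w ql qr = w ql * vel ql + wave_sum g eta lam (Rmin 0) w ql qr.
Proof. unfold flux_w_l, wave_sum; cbv zeta; ring. Qed.

Lemma flux_w_r_eq g eta lam w ql qr :
  flux_w_r g eta lam w ql qr = w qr * vel qr - wave_sum g eta lam (Rmax 0) w ql qr.
Proof. unfold flux_w_r, wave_sum; cbv zeta; ring. Qed.

(* Half of the cell sees the Riemann problem at its right interface, half the one at its left
   interface; the CFL condition keeps the waves inside their half cell. *)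
Definition cell_decomposition (g eta lam lm : R) (qm q qp : state) : list (R * state) :=
  let m s := lm * Rmin 0 s in
  let M s := lm * Rmax 0 s in
  [(/ 2 + m (Sig1 g eta lam q qp), q);
   (m (Sig2 g eta lam q qp) - m (Sig1 g eta lam q qp), ql_star g eta lam q qp);
   (m (Sig3 g eta lam q qp) - m (Sig2 g eta lam q qp), qr_star g eta lam q qp);
   (- m (Sig3 g eta lam q qp), qp);
   (M (Sig1 g eta lam qm q), qm);
   (M (Sig2 g eta lam qm q) - M (Sig1 g eta lam qm q), ql_star g eta lam qm q);
   (M (Sig3 g eta lam qm q) - M (Sig2 g eta lam qm q), qr_star g eta lam qm q);
   (/ 2 - M (Sig3 g eta lam qm q), q)].

Lemma wsum_cell_decomposition g eta lam lm qm q qp X :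
  wsum (cell_decomposition g eta lam lm qm q qp) X
  = X q - lm * wave_sum g eta lam (Rmin 0) X q qp - lm * wave_sum g eta lam (Rmax 0) X qm q.
Proof. unfold wsum, cell_decomposition, wave_sum; cbv zeta; cbn [fold_right fst snd]; field. Qed.

Lemma Rmin0_ge_neg_abs s : - Rabs s <= Rmin 0 s.
Proof. unfold Rmin, Rabs; destruct Rle_dec, Rcase_abs; lra. Qed.

Lemma Rmax0_le_abs s : Rmax 0 s <= Rabs s.
Proof. unfold Rmax, Rabs; destruct Rle_dec, Rcase_abs; lra. Qed.

Lemma cell_decomposition_admissible g eta lam lm qm q qp : 0 < g -> 0 < eta -> 0 < lam -> 0 < lm ->
  admissible qm -> admissible q -> admissible qp ->
  lm * Rabs (Sig1 g eta lam q qp) <= / 2 -> lm * Rabs (Sig3 g eta lam qm q) <= / 2 ->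
  forall p, In p (cell_decomposition g eta lam lm qm q qp) -> 0 <= fst p /\ admissible (snd p).
Proof.
intros Hg He Hl Hlm Hqm Hq Hqp C1 C3 p Hp.
destruct (Sig_order g eta lam q qp Hg He Hl Hq Hqp) as [O1 O2].
destruct (Sig_order g eta lam qm q Hg He Hl Hqm Hq) as [O3 O4].
assert (Hmin : forall a b, a <= b -> 0 <= lm * Rmin 0 b - lm * Rmin 0 a).
{ intros a b Hab; rewrite <- Rmult_minus_distr_l; apply Rmult_le_pos; [lra|].
  pose proof (Rle_min_compat_l _ _ 0 Hab); lra. }
assert (Hmax : forall a b, a <= b -> 0 <= lm * Rmax 0 b - lm * Rmax 0 a).
{ intros a b Hab; rewrite <- Rmult_minus_distr_l; apply Rmult_le_pos; [lra|].
  pose proof (Rle_max_compat_l _ _ 0 Hab); lra. }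
assert (0 <= lm * Rmax 0 (Sig1 g eta lam qm q)) by (apply Rmult_le_pos; [lra| apply Rmax_l]).
assert (lm * Rmin 0 (Sig3 g eta lam q qp) <= lm * 0) by (apply Rmult_le_compat_l; [lra| apply Rmin_l]).
assert (lm * - Rabs (Sig1 g eta lam q qp) <= lm * Rmin 0 (Sig1 g eta lam q qp))
  by (apply Rmult_le_compat_l; [lra| apply Rmin0_ge_neg_abs]).
assert (lm * Rmax 0 (Sig3 g eta lam qm q) <= lm * Rabs (Sig3 g eta lam qm q))
  by (apply Rmult_le_compat_l; [lra| apply Rmax0_le_abs]).
unfold cell_decomposition in Hp; cbv zeta in Hp; cbn [In] in Hp.
repeat destruct Hp as [<- | Hp]; try contradiction; cbn [fst snd]; split;
  first [ lra | apply Hmin; lra | apply Hmax; lra | assumption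
        | apply admissible_ql_star; assumption | apply admissible_qr_star; assumption ].
Qed.

Lemma scheme_step_average g eta lam dt dx qm q qp : 0 < g -> 0 < eta -> 0 < lam ->
  admissible qm -> admissible q -> admissible qp ->
  scheme_step g eta lam dt dx qm q qp = average (cell_decomposition g eta lam (dt / dx) qm q qp).
Proof.
intros Hg He Hl Hqm Hq Hqp.
unfold average; rewrite !wsum_cell_decomposition.
unfold scheme_step, flux_l, flux_r; cbv zeta; cbn [st_h st_hu st_hsxx st_hszz].
rewrite (flux_h_left g eta lam q qp), (flux_h_right g eta lam qm q), (flux_hu_left g eta lam q qp),
  (flux_hu_right g eta lam qm q), !flux_w_l_eq, !flux_w_r_eq by assumption.
f_equal; ring.
Qed.

Lemma cell_energy_inequality g eta lam dt dx qm q qp : 0 < g -> 0 < eta -> 0 < lam ->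
  0 < dt -> 0 < dx -> admissible qm -> admissible q -> admissible qp ->
  dt / dx * Rabs (Sig1 g eta lam q qp) <= / 2 -> dt / dx * Rabs (Sig3 g eta lam qm q) <= / 2 ->
  energy g eta lam (scheme_step g eta lam dt dx qm q qp) - energy g eta lam q
  + dt / dx * (num_energy_flux g eta lam q qp - num_energy_flux g eta lam qm q) <= 0.
Proof.
intros Hg He Hl Hdt Hdx Hqm Hq Hqp C1 C3.
assert (Hlm : 0 < dt / dx) by (apply Rdiv_lt_0_compat; lra).
destruct (energy_jensen g eta lam (cell_decomposition g eta lam (dt / dx) qm q qp)) as [_ J];
  [auto | auto | auto | apply cell_decomposition_admissible; auto
  | rewrite wsum_cell_decomposition; unfold wave_sum; ring |].
rewrite <- scheme_step_average in J by assumption; rewrite wsum_cell_decomposition in J.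
pose proof (energy_dissipation g eta lam qm q Hg He Hl Hqm Hq) as Hd.
rewrite <- (wave_sum_min_max g eta lam (energy g eta lam) qm q) in Hd.
assert (dt / dx * (energy_flux g eta lam q - energy_flux g eta lam qm
  - (wave_sum g eta lam (Rmin 0) (energy g eta lam) qm q
     + wave_sum g eta lam (Rmax 0) (energy g eta lam) qm q)) <= dt / dx * 0)
  by (apply Rmult_le_compat_l; lra).
unfold num_energy_flux; lra.
Qed.

Lemma cfl_ratio dt dx s A : 0 < dx -> s <= A -> dt * A <= / 2 * dx -> 0 < dt -> dt / dx * s <= / 2.
Proof.
intros Hdx Hs HA Hdt.
apply (Rmult_le_reg_r dx); [exact Hdx|].
replace (dt / dx * s * dx) with (dt * s) by (field; lra).
assert (dt * s <= dt * A) by (apply Rmult_le_compat_l; lra).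
lra.
Qed.

Theorem lemma3 (g eta lam : R) :
  0 < g -> 0 < eta -> 0 < lam ->
  (forall ql qr : state, admissible ql -> admissible qr ->
     0 < inv_hl_star g eta lam ql qr /\ 0 < inv_hr_star g eta lam ql qr /\
     (forall h, Rmin (st_h ql) (hl_star g eta lam ql qr) <= h <=
                Rmax (st_h ql) (hl_star g eta lam ql qr) ->
        h ^ 2 * dPdh_s g eta lam h (s_xx ql) (s_zz ql) <= c_l g eta lam ql qr ^ 2) /\
     (forall h, Rmin (st_h qr) (hr_star g eta lam ql qr) <= h <=
                Rmax (st_h qr) (hr_star g eta lam ql qr) ->
        h ^ 2 * dPdh_s g eta lam h (s_xx qr) (s_zz qr) <= c_r g eta lam ql qr ^ 2))
  /\
  (exists Gnum : state -> state -> R,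
     (forall q : state, admissible q -> Gnum q q = energy_flux g eta lam q) /\
     forall (dx : Z -> R) (dt : R) (q : Z -> state),
       (forall i, 0 < dx i) -> 0 < dt ->
       (forall i, admissible (q i)) ->
       (forall i, dt * max_speed g eta lam (q i) (q (i + 1)%Z)
                  <= / 2 * Rmin (dx i) (dx (i + 1)%Z)) ->
       forall i : Z,
         energy g eta lam (scheme_step g eta lam dt (dx i) (q (i - 1)%Z) (q i) (q (i + 1)%Z))
         - energy g eta lam (q i)
         + dt / dx i * (Gnum (q i) (q (i + 1)%Z) - Gnum (q (i - 1)%Z) (q i)) <= 0).
Proof.
intros Hg Heta Hlam; split.
- intros ql qr Hql Hqr; exact (relaxation_subcharacteristic g eta lam ql qr Hg Heta Hlam Hql Hqr).
- exists (num_energy_flux g eta lam); split.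
  + intros q Hq; exact (num_energy_flux_diag g eta lam q Hg Heta Hlam Hq).
  + intros dx dt q Hdx Hdt Hq Hcfl i.
    apply cell_energy_inequality; auto.
    * apply (cfl_ratio _ _ _ (max_speed g eta lam (q i) (q (i + 1)%Z)));
        [auto | apply Rmax_l | | exact Hdt].
      pose proof (Hcfl i); pose proof (Rmin_l (dx i) (dx (i + 1)%Z)); lra.
    * apply (cfl_ratio _ _ _ (max_speed g eta lam (q (i - 1)%Z) (q i))); [auto | | | exact Hdt].
      { unfold max_speed; eapply Rle_trans; apply Rmax_r. }
      pose proof (Hcfl (i - 1)%Z) as Hc; replace (i - 1 + 1)%Z with i in Hc by ring.
      pose proof (Rmin_r (dx (i - 1)%Z) (dx i)); lra.
Qed.
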